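(* Let $P$ be a finite poset. If $\mathcal{J}$ is a poset ideal in $\mathrm{Hom}(P,\mathbb{N})$, then $\overline{\Lambda}\mathcal{J}=\{\overline{\Lambda}\phi:\phi\in\mathcal{J}\}$ is a poset ideal in $\mathbb{N}P$, i.e. every monomial dividing a monomial in $\overline{\Lambda}\mathcal{J}$ lies in $\overline{\Lambda}\mathcal{J}$.
   Context: $\mathbb{N}=\{0,1,\dots\}$; $\mathrm{Hom}(P,\mathbb{N})$ is the set of isotone maps $P\to\mathbb{N}$ ordered pointwise; a poset ideal is a down-closed subset. $\mathbb{N}P$ is the monoid of formal sums $\sum_{p\in P}n_pp$, $n_p\in\mathbb{N}$, ordered componentwise, identified with the monomials of $k[x_P]$ ($k$ a field) ordered by divisibility. The ascent is $\Lambda\phi=\{(p,i):\phi(q)\le i<\phi(p)\ \forall q<p\}$ and $\overline{\Lambda}\phi=\sum_{(p,i)\in\Lambda\phi}p\in\mathbb{N}P$, i.e. the monomial $\prod_{(p,i)\in\Lambda\phi}x_p$. *)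

From mathcomp Require Import all_boot all_order.
Set Implicit Arguments. Unset Strict Implicit. Unset Printing Implicit Defensive.
Import Order.TTheory.
Local Open Scope order_scope.

Definition isotone {d} {P : finPOrderType d} (phi : {ffun P -> nat}) : Prop :=
  forall p q : P, p <= q -> (phi p <= phi q)%N.

(* Elements of N P (monomials of k[x_P]) are functions P -> nat
   (coefficient vectors), ordered componentwise (= divisibility). *)
Definition leNP {d} {P : finPOrderType d} (m n : {ffun P -> nat}) : Prop :=
  forall p, (m p <= n p)%N.

Definition in_ascent {d} {P : finPOrderType d} (phi : {ffun P -> nat})
  (p : P) (i : nat) : bool :=
  (i < phi p)%N && [forall q : P, (q < p) ==> (phi q <= i)%N].

(* Lambda-bar phi = sum_{(p,i) in Lambda phi} p : the coefficient of p is the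
   number of i with (p,i) in Lambda phi (all such i are < phi p). *)
Definition ascent_bar {d} {P : finPOrderType d} (phi : {ffun P -> nat})
  : {ffun P -> nat} :=
  [ffun p => #|[pred i : 'I_(phi p) | in_ascent phi p i]|].

Definition hom_ideal {d} {P : finPOrderType d} (J : {ffun P -> nat} -> Prop)
  : Prop :=
  (forall phi, J phi -> isotone phi) /\
  (forall phi psi, J phi -> isotone psi -> leNP psi phi -> J psi).

From mathcomp Require Import all_boot all_order.
From mathcomp Require Import zify.
Import Order.TTheory.
Set Implicit Arguments.
Unset Strict Implicit.
Unset Printing Implicit Defensive.

(* Writing M phi p for the maximum of phi below p, the coefficient of p in
   Lambda-bar phi is phi p - M phi p.  Given m <= Lambda-bar phi with phi in J,
   solve psi p = m p + M psi p by Kleene iteration from 0: the map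
   f |-> m + M f is monotone and keeps the maps below phi, so the iteration
   stalls at a fixpoint psi <= phi.  Any such fixpoint is isotone, hence lies in
   the ideal J, and its ascent is m. *)

Lemma nondecreasing_bounded_stalls (u : nat -> nat) (B : nat) :
  (forall k, u k <= u k.+1) -> (forall k, u k <= B) -> exists k, u k = u k.+1.
Proof.
move=> u_incr u_bnd.
have grows k : (exists j, u j = u j.+1) \/ k <= u k.
  elim: k => [|k [stall | k_le]]; [by right | by left |].
  have [eq_u | ne_u] := eqVneq (u k) (u k.+1); first by left; exists k.
  by right; apply: leq_ltn_trans k_le _; rewrite ltn_neqAle ne_u u_incr.
have [//|] := grows B.+1.
by rewrite ltnNge u_bnd.
Qed.

Section BoundedFixpoint.

Variables (T : finType) (F : {ffun T -> nat} -> {ffun T -> nat}).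
Variable b : {ffun T -> nat}.
Hypothesis F_homo : forall f g : {ffun T -> nat},
  (forall x, f x <= g x) -> forall x, F f x <= F g x.
Hypothesis F_bounded : forall f : {ffun T -> nat},
  (forall x, f x <= b x) -> forall x, F f x <= b x.

Let s k := iter k F [ffun => 0].

Let s_incr k x : s k x <= s k.+1 x.
Proof. by elim: k x => [|k IHk] x; [rewrite ffunE | apply: F_homo]. Qed.

Let s_bounded k x : s k x <= b x.
Proof. by elim: k x => [|k IHk] x; [rewrite ffunE | apply: F_bounded]. Qed.

Lemma bounded_fixpoint : exists2 f, F f = f & forall x, f x <= b x.
Proof.
have [k sum_eq] : exists k, \sum_x s k x = \sum_x s k.+1 x.
  apply: (@nondecreasing_bounded_stalls _ (\sum_x b x)) => k.
    by apply: leq_sum => x _; apply: s_incr.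
  by apply: leq_sum => x _; apply: s_bounded.
exists (s k); last exact: s_bounded.
have sum_leqif :
    \sum_x s k x <= \sum_x s k.+1 x ?= iff [forall x, s k x == s k.+1 x].
  by apply: leqif_sum => x _; apply/leqif_eq/s_incr.
move/eqP: sum_eq; rewrite sum_leqif => /forallP s_eq.
by apply/ffunP => x; apply/esym/eqP/s_eq.
Qed.

End BoundedFixpoint.

Lemma card_ord_geq n a : #|[pred i : 'I_n | a <= i]| = n - a.
Proof.
rewrite -sum1_card big_mkcond /=.
rewrite -(big_mkord xpredT (fun i => if a <= i then 1 else 0)).
elim: n => [|n IHn]; first by rewrite big_geq.
by rewrite big_nat_recr //= IHn; case: leqP => ?; lia.
Qed.

Section MaxBelow.

Variables (d : Order.disp_t) (P : finPOrderType d).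
Implicit Types (f g m : {ffun P -> nat}) (p : P).

Definition max_below f p : nat := \max_(q | (q < p)%O) f q.

Lemma in_ascentE f p i : in_ascent f p i = (max_below f p <= i < f p).
Proof.
rewrite /in_ascent andbC; congr (_ && _).
apply/forall_inP/bigmax_leqP => below_i q q_lt_p; exact: below_i.
Qed.

Lemma ascent_barE f p : ascent_bar f p = f p - max_below f p.
Proof.
rewrite ffunE -card_ord_geq; apply: eq_card => i.
by rewrite !inE in_ascentE ltn_ord andbT.
Qed.

Lemma max_below_homo f g p :
  (forall q, f q <= g q) -> max_below f p <= max_below g p.
Proof.
move=> le_fg; apply/bigmax_leqP => q q_lt_p.
by apply: leq_trans (le_fg q) _; apply: leq_bigmax_cond.
Qed.

Lemma max_below_isotone f p : isotone f -> max_below f p <= f p.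
Proof. by move=> f_iso; apply/bigmax_leqP => q /ltW; apply: f_iso. Qed.

Lemma max_below_fixpoint_isotone m f :
  (forall p, f p = m p + max_below f p) -> isotone f.
Proof.
move=> f_fix p q; rewrite le_eqVlt => /predU1P [-> // | p_lt_q].
by rewrite (f_fix q); apply: leq_trans (leq_addl _ _); apply: leq_bigmax_cond.
Qed.

Lemma ascent_bar_max_below_fixpoint m f :
  (forall p, f p = m p + max_below f p) -> ascent_bar f = m.
Proof.
by move=> f_fix; apply/ffunP => p; rewrite ascent_barE {1}f_fix addnK.
Qed.

End MaxBelow.

Theorem proposition3p4 (d : Order.disp_t) (P : finPOrderType d)
  (J : {ffun P -> nat} -> Prop) :
  hom_ideal J ->
  forall (m : {ffun P -> nat}) (phi : {ffun P -> nat}),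
    J phi -> leNP m (ascent_bar phi) ->
    exists2 psi : {ffun P -> nat}, J psi & ascent_bar psi = m.
Proof.
move=> [J_isotone J_down] m phi J_phi m_le.
pose F (f : {ffun P -> nat}) := [ffun p => m p + max_below f p].
have F_homo (f g : {ffun P -> nat}) :
    (forall p, f p <= g p) -> forall p, F f p <= F g p.
  by move=> le_fg p; rewrite !ffunE leq_add2l max_below_homo.
have F_bounded (f : {ffun P -> nat}) :
    (forall p, f p <= phi p) -> forall p, F f p <= phi p.
  move=> le_f p; rewrite ffunE; have := m_le p; rewrite ascent_barE.
  have := max_below_homo p le_f.
  have := max_below_isotone p (J_isotone _ J_phi).
  lia.
have [psi psi_fix psi_le] := bounded_fixpoint F_homo F_bounded.
have psi_eq p : psi p = m p + max_below psi p by rewrite -{1}psi_fix ffunE.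
exists psi; last exact: ascent_bar_max_below_fixpoint psi_eq.
exact: J_down J_phi (max_below_fixpoint_isotone psi_eq) psi_le.
Qed.
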